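(* Fix $l\in\mathbb N$ and $A>0$, and let $G_l$ be a random variable with distribution function $$\mathbb P\{G_l\le x\}=1-e^{-e^x}\Big(1+e^x+\cdots+\frac{(e^x)^{l-1}}{(l-1)!}\Big),\quad x\in\mathbb R.$$ Then there exists a constant $C_l=C_l(A)>0$ such that $$\mathbb P\{s+u<G_l\le s+v\}\le C_l\,(v-u)\,e^{-|s|}$$ for all $u<v$ in $[-A,A]$ and all $s\in\mathbb R$. *)

From HB Require Import structures.
From mathcomp Require Import all_boot all_order all_algebra.
From mathcomp Require Import all_classical all_reals all_analysis.
Set Implicit Arguments. Unset Strict Implicit. Unset Printing Implicit Defensive.
Import Order.TTheory GRing.Theory Num.Theory.
Local Open Scope ring_scope.

Definition Gdistr (R : realType) (l : nat) (x : R) : R :=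
  1 - expR (- expR x) * \sum_(k < l) (expR x) ^+ k / (k`!)%:R.

(* With [t = e^x], [Gdistr l x = 1 - e^-t S_l(t)], where [S_l] is the degree
   [l - 1] partial sum of the exponential series.  For [h = v - u >= 0],
   [e^-t1 S_l(t1) - e^-t2 S_l(t2) <= (t2 - t1) e^-t1 S_l(t2)] (from
   [e^-d >= 1 - d] and monotonicity of [S_l]), and [t2 - t1 <= h e^h t1],
   [S_l(t2) <= e^(hl) S_l(t1)].  This reduces the claim to the bound
   [t e^-t S_l(t) <= K min(t, 1/t) = K e^-|x|], which follows termwise from
   [t^m e^-t <= m!], and [|s + u| >= |s| - A] gives the factor [e^-|s|]. *)

From HB Require Import structures.
From mathcomp Require Import all_boot all_order all_algebra.
From mathcomp Require Import all_classical all_reals all_analysis.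
From mathcomp Require Import ring lra.
Import Order.TTheory GRing.Theory Num.Theory.
Local Open Scope ring_scope.

Section PoissonTail.
Variable R : realType.
Implicit Types (a h t c A s u v : R) (l j m : nat).

Definition exp_partial l t : R := \sum_(k < l) t ^+ k / k`!%:R.

Definition poisson_lt l t : R := expR (- t) * exp_partial l t.

Definition poisson_moment l j : R := \sum_(k < l) (k + j)`!%:R / k`!%:R.

Lemma GdistrE l x : Gdistr l x = 1 - poisson_lt l (expR x).
Proof. by []. Qed.

Lemma exp_partial_ge0 l t : 0 <= t -> 0 <= exp_partial l t.
Proof. by move=> t0; apply: sumr_ge0 => k _; rewrite divr_ge0 ?exprn_ge0. Qed.

Lemma ler_exp_partial l t1 t2 : 0 <= t1 -> t1 <= t2 ->
  exp_partial l t1 <= exp_partial l t2.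
Proof.
move=> t10 t12; apply: ler_sum => k _; rewrite ler_wpM2r ?invr_ge0 //.
by rewrite lerXn2r ?nnegrE // (le_trans t10).
Qed.

Lemma exp_partial_scale l c t : 1 <= c -> 0 <= t ->
  exp_partial l (c * t) <= c ^+ l * exp_partial l t.
Proof.
move=> c1 t0; rewrite mulr_sumr; apply: ler_sum => k _.
rewrite exprMn -mulrA ler_wpM2r ?divr_ge0 ?exprn_ge0 //.
exact/ler_weXn2l/ltnW.
Qed.

Lemma exprn_expRN_le_fact m t : 0 <= t -> t ^+ m * expR (- t) <= m`!%:R.
Proof.
move=> t0; rewrite expRN ler_pdivrMr ?expR_gt0 //.
case: m => [|m]; first by rewrite expr0 fact0 mul1r -expR0 ler_expR.
rewrite -ler_pdivrMl ?ltr0n ?fact_gt0 // mulrC.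
by apply: le_trans (expR_ge1Dxn m t0); rewrite lerDr.
Qed.

Lemma poisson_moment_ge0 l j : 0 <= poisson_moment l j.
Proof. by apply: sumr_ge0 => k _; rewrite divr_ge0. Qed.

Lemma poisson_moment0 l : poisson_moment l 0 = l%:R.
Proof.
rewrite /poisson_moment (eq_bigr (fun _ => 1)) ?sumr_const ?card_ord //.
by move=> k _; rewrite addn0 divff // pnatr_eq0 -lt0n fact_gt0.
Qed.

Lemma poisson_lt_mulXn_le l j t : 0 <= t ->
  t ^+ j * poisson_lt l t <= poisson_moment l j.
Proof.
move=> t0; rewrite /poisson_lt /exp_partial !mulr_sumr; apply: ler_sum => k _.
have -> : t ^+ j * (expR (- t) * (t ^+ k / k`!%:R))
        = t ^+ (k + j) * expR (- t) / k`!%:R by rewrite exprD; ring.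
by rewrite ler_wpM2r ?invr_ge0 // exprn_expRN_le_fact.
Qed.

(* The moment bounds for [j = 0] and [j = 2] handle [a < 0] and [a >= 0]. *)
Lemma expR_poisson_lt_le l a :
  expR a * poisson_lt l (expR a) <= (l%:R + poisson_moment l 2) * expR (- `|a|).
Proof.
have Pge0 := poisson_moment_ge0 l 2.
have Ega : 0 <= expR a := expR_ge0 a.
case: (leP 0 a) => a0; rewrite mulrDl.
- rewrite ger0_norm // -[X in X <= _]add0r lerD ?mulr_ge0 //.
  have -> : expR a * poisson_lt l (expR a)
          = expR a ^+ 2 * poisson_lt l (expR a) * expR (- a).
    by rewrite -[LHS]mulr1 -(expRxMexpNx_1 a); ring.
  by rewrite ler_wpM2r ?expR_ge0 // poisson_lt_mulXn_le.
- rewrite ltr0_norm // opprK -[X in X <= _]addr0 lerD ?mulr_ge0 //.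
  rewrite [leRHS]mulrC ler_wpM2l //.
  by have := @poisson_lt_mulXn_le l 0 _ Ega; rewrite expr0 mul1r poisson_moment0.
Qed.

Lemma poisson_lt_sub_le l t1 t2 : 0 <= t1 -> t1 <= t2 ->
  poisson_lt l t1 - poisson_lt l t2 <= (t2 - t1) * expR (- t1) * exp_partial l t2.
Proof.
move=> t10 t12; set d := t2 - t1.
have S2 : 0 <= exp_partial l t2 by rewrite exp_partial_ge0 // (le_trans t10).
have S12 : exp_partial l t1 <= exp_partial l t2 by exact: ler_exp_partial.
have ed : 1 - d <= expR (- d) := expR_ge1Dx (- d).
have E2 : poisson_lt l t2 = expR (- t1) * (expR (- d) * exp_partial l t2).
  by rewrite /poisson_lt mulrA -expRD /d; congr (expR _ * _); ring.
rewrite E2 /poisson_lt -mulrBr mulrAC [leRHS]mulrC ler_wpM2l ?expR_ge0 //.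
have := ler_wpM2r S2 ed; lra.
Qed.

Lemma expR_sub1_le h : 0 <= h -> expR h - 1 <= h * expR h.
Proof.
move=> h0; have := ler_wpM2r (expR_ge0 h) (expR_ge1Dx (- h)).
rewrite mulrDl mul1r mulNr [expR (- h) * _]mulrC expRxMexpNx_1; lra.
Qed.

Lemma Gdistr_increment_le l a h : 0 <= h ->
  Gdistr l (a + h) - Gdistr l a
    <= h * expR h ^+ l.+1 * (expR a * poisson_lt l (expR a)).
Proof.
move=> h0; set t := expR a; set c := expR h.
have t0 : 0 <= t := expR_ge0 a.
have c1 : 1 <= c by rewrite /c -expR0 ler_expR.
have tc : t <= c * t by rewrite ler_peMl.
rewrite !GdistrE expRD -/t -/c mulrC opprB addrC subrKA.
apply: le_trans (poisson_lt_sub_le l _ _ t0 tc) _.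
have -> : c * t - t = t * (c - 1) by ring.
apply: (@le_trans _ _ (t * (h * c) * expR (- t) * (c ^+ l * exp_partial l t))).
  rewrite ler_pM ?mulr_ge0 ?expR_ge0 ?subr_ge0 ?exp_partial_ge0 ?(le_trans t0) //.
    by rewrite ler_wpM2r ?expR_ge0 // ler_wpM2l // expR_sub1_le.
  exact: exp_partial_scale.
by rewrite /poisson_lt exprS le_eqVlt; apply/predU1l; ring.
Qed.

Definition Gdistr_lipschitz l A : R :=
  expR (2 * A) ^+ l.+1 * expR A * (l%:R + poisson_moment l 2).

Lemma Gdistr_lipschitz_gt0 l A : (0 < l)%N -> 0 < Gdistr_lipschitz l A.
Proof.
move=> l0; rewrite !mulr_gt0 ?exprn_gt0 ?expR_gt0 //.
by rewrite ltr_wpDr ?poisson_moment_ge0 ?ltr0n.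
Qed.

Lemma Gdistr_sub_le l A s u v : -A <= u -> u <= v -> v <= A ->
  Gdistr l (s + v) - Gdistr l (s + u)
    <= Gdistr_lipschitz l A * (v - u) * expR (- `|s|).
Proof.
move=> Au uv vA; have h0 : 0 <= v - u by rewrite subr_ge0.
have -> : s + v = (s + u) + (v - u) by ring.
apply: le_trans (Gdistr_increment_le l _ _ h0) _.
have eh : expR (v - u) ^+ l.+1 <= expR (2 * A) ^+ l.+1.
  by rewrite lerXn2r ?nnegrE ?expR_ge0 // ler_expR; lra.
have es : expR (- `|s + u|) <= expR A * expR (- `|s|).
  rewrite -expRD ler_expR.
  have := ler_normD (s + u) (- u); rewrite addrK normrN.
  have : `|u| <= A by rewrite ler_norml; lra.
  lra.
apply: (@le_trans _ _ ((v - u) * expR (2 * A) ^+ l.+1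
    * ((l%:R + poisson_moment l 2) * (expR A * expR (- `|s|))))).
  rewrite ler_pM ?mulr_ge0 ?exprn_ge0 ?expR_ge0 ?exp_partial_ge0 ?ler_wpM2l //.
  apply: le_trans (expR_poisson_lt_le l (s + u)) _.
  by rewrite ler_wpM2l // addr_ge0 ?poisson_moment_ge0.
by rewrite /Gdistr_lipschitz le_eqVlt; apply/predU1l; ring.
Qed.

End PoissonTail.

Local Open Scope classical_set_scope.

Section RandomVariableInterval.
Context d (T : measurableType d) (R : realType).
Variables (P : probability T R) (X : {RV P >-> R}).

Lemma measurable_rv_le x : measurable [set w | X w <= x].
Proof.
rewrite (_ : [set w | X w <= x] = X @^-1` `]-oo, x]); first exact: measurable_funPTI.
by apply/seteqP; split => w /=; rewrite in_itv.
Qed.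

Lemma measure_rv_itv_oc a b : a <= b ->
  P [set w | a < X w <= b] = (P [set w | (X w <= b)%R] - P [set w | (X w <= a)%R])%E.
Proof.
move=> ab.
have -> : [set w | a < X w <= b] = [set w | X w <= b] `\` [set w | X w <= a].
  apply/seteqP; split => w /=; rewrite ltNge.
    by move=> /andP[/negP ? ?].
  by move=> [-> /negP ->].
have [mb ma] := (measurable_rv_le b, measurable_rv_le a).
rewrite measureD //; last by rewrite -ge0_fin_numE ?fin_num_measure.
by rewrite setIidr // => w /= /le_trans; apply.
Qed.

End RandomVariableInterval.

Theorem lemma2p13 (R : realType) (l : nat) (hl : (0 < l)%N) (A : R) (hA : 0 < A)
  (d : measure_display) (T : measurableType d) (P : probability T R)
  (G : {RV P >-> R})
  (hG : forall x : R, P [set w | G w <= x] = (Gdistr l x)%:E) :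
  exists C : R, 0 < C /\
    forall s u v : R, -A <= u -> u < v -> v <= A ->
      (P [set w | (s + u < G w <= s + v)%R] <= (C * (v - u) * expR (- `|s|))%:E)%E.
Proof.
exists (Gdistr_lipschitz R l A); split; first exact: Gdistr_lipschitz_gt0.
move=> s u v Au uv vA.
rewrite measure_rv_itv_oc; last by rewrite lerD2l ltW.
rewrite !hG -EFinB lee_fin.
by apply: Gdistr_sub_le => //; exact: ltW.
Qed.
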